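(* Let $\tau>0$ and let $f\in C(\mathbb R\times\mathbb R,\mathbb R)$ satisfy: (1) $f$ is asymptotically $\tau$-periodic in time; (2) $f$ is positively regular; (3) for some $u_0\in\mathbb R$ the solution $\varphi(t,u_0,f)$ of $x'=f(t,x)$, $x(0)=u_0$, is bounded on $\mathbb R_+=[0,\infty)$. Then $\varphi(t,u_0,f)$ is $S$-asymptotically $\tau$-periodic, i.e. $\lim_{t\to+\infty}|\varphi(t+\tau,u_0,f)-\varphi(t,u_0,f)|=0$.
   Context: $C(\mathbb R\times\mathbb R,\mathbb R)$ is the space of continuous functions $\mathbb R\times\mathbb R\to\mathbb R$ with the compact-open topology (uniform convergence on compact sets). For $h\in\mathbb R$, $f^h(t,x):=f(t+h,x)$. $H^+(f)$ denotes the closure in $C(\mathbb R\times\mathbb R,\mathbb R)$ of $\{f^h:\ h\ge 0\}$. $f$ is called positively regular if for every $g\in H^+(f)$ and every $v\in\mathbb R$ the equation $y'=g(t,y)$ has a unique solution $\varphi(t,v,g)$ with $\varphi(0,v,g)=v$, and it is defined on all of $\mathbb R_+$. $f$ is called asymptotically $\tau$-periodic in time if $f=P+R$ with $P,R\in C(\mathbb R\times\mathbb R,\mathbb R)$, $P(t+\tau,x)=P(t,x)$ for all $(t,x)$, and $\lim_{t\to+\infty}R(t,x)=0$ uniformly in $x$ on every compact subset of $\mathbb R$. *)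

From Stdlib Require Import Reals.
From Coquelicot Require Import Coquelicot.
Open Scope R_scope.

Definition cont2 (f : R -> R -> R) : Prop :=
  forall t x, continuous (fun p : R * R => f (fst p) (snd p)) (t, x).

(* Membership in H^+(f): closure of {f^h : h >= 0} in C(RxR,R) with the
   compact-open topology (= uniform convergence on compacta).  Every compact
   subset of R x R lies in a square [-r,r]^2, so a basic neighbourhood of g is
   {k : sup_{[-r,r]^2} |k - g| < eps}. *)
Definition in_Hplus (f g : R -> R -> R) : Prop :=
  cont2 g /\
  forall r eps, 0 < eps -> exists h, 0 <= h /\
    forall t x, Rabs t <= r -> Rabs x <= r -> Rabs (f (t + h) x - g t x) < eps.

Definition solution_on (g : R -> R -> R) (v T : R) (phi : R -> R) : Prop :=
  phi 0 = v /\
  filterlim phi (at_right 0) (locally (phi 0)) /\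
  forall t, 0 < t < T -> is_derive phi t (g t (phi t)).

Definition solution_Rplus (g : R -> R -> R) (v : R) (phi : R -> R) : Prop :=
  forall T, 0 < T -> solution_on g v T phi.

Definition positively_regular (f : R -> R -> R) : Prop :=
  forall g, in_Hplus f g -> forall v, exists phi,
    solution_Rplus g v phi /\
    forall T psi, 0 < T -> solution_on g v T psi ->
      forall t, 0 <= t < T -> psi t = phi t.

Definition asymp_periodic (tau : R) (f : R -> R -> R) : Prop :=
  exists P Q : R -> R -> R,
    cont2 P /\ cont2 Q /\
    (forall t x, f t x = P t x + Q t x) /\
    (forall t x, P (t + tau) x = P t x) /\
    (forall r eps, 0 < eps -> exists T0, forall t x,
        T0 <= t -> Rabs x <= r -> Rabs (Q t x) < eps).

From Stdlib Require Import Reals Lra Lia ZArith ClassicalEpsilon FunctionalExtensionality.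
From Coquelicot Require Import Coquelicot.
From mathcomp Require filter.
Open Scope R_scope.

(* If [phi (t + tau) - phi t >= eps] along times tending to infinity, pass to an
   ultrafilter on these times: their phases modulo [tau] converge to some [s] and [phi]
   converges to some [z].  By continuous dependence on the equation, the solution [Y] of
   the limit equation [y' = P (t + s, y)] with [Y 0 = z] satisfies [Y tau >= z + eps].
   Continuous dependence again gives a neighbourhood of [z] and of the phase [s] from
   which every solution of a late shift of [f] is above [z + eps/2] one period later.
   Solutions of a positively regular equation cannot cross, so [phi], once in that
   neighbourhood, stays above [z + eps/2] at all later times of that phase, although it
   comes back close to [z].  Applied to [-phi], which solves [y' = -f (t, -y)], the same
   argument gives the lower bound.  Limits along ultrafilters replace the extraction of
   convergent subsequences. *)

Record ultrafilter (I : Type) := Ultrafilter {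
  almost : (I -> Prop) -> Prop;
  almost_True : almost (fun _ => True);
  almost_and : forall A B, almost A -> almost B -> almost (fun i => A i /\ B i);
  almost_impl : forall A B : I -> Prop, (forall i, A i -> B i) -> almost A -> almost B;
  almost_exists : forall A, almost A -> exists i, A i;
  almost_or_not : forall A, almost A \/ almost (fun i => ~ A i) }.
Arguments almost {I} u A.
Arguments almost_True {I} u.
Arguments almost_and {I} u A B.
Arguments almost_impl {I} u A B.
Arguments almost_exists {I} u A.
Arguments almost_or_not {I} u A.

Lemma ultrafilter_refining_chain (I : Type) (B : nat -> I -> Prop) :
  (forall n, exists i, B n i) -> (forall n i, B (S n) i -> B n i) ->
  exists u : ultrafilter I, forall n, almost u (B n).
Proof.
  intros Hne Hdec.
  assert (Hle : forall n m, (n <= m)%nat -> forall i, B m i -> B n i).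
  { intros n m Hnm. induction Hnm; auto. }
  set (F := fun A : I -> Prop => exists n, forall i, B n i -> A i).
  assert (PF : mathcomp.classical.filter.ProperFilter F).
  { constructor.
    - intros [n Hn]. destruct (Hne n) as [i Hi]. exact (Hn i Hi).
    - constructor.
      + exists 0%nat. intros; exact Logic.I.
      + intros A C [n Hn] [m Hm]. exists (max n m). intros i Hi. split.
        * apply Hn. apply (Hle n (max n m)); auto. apply Nat.le_max_l.
        * apply Hm. apply (Hle m (max n m)); auto. apply Nat.le_max_r.
      + intros A C HAC [n Hn]. exists n. intros i Hi. apply HAC, Hn, Hi. }
  destruct (mathcomp.classical.filter.ultraFilterLemma PF) as [G [GU FG]].
  destruct (@mathcomp.classical.filter.ultra_proper _ G GU) as [Gne [GT GI GS]].
  unshelve eexists (Ultrafilter I G _ _ _ _ _).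
  - exact GT.
  - exact GI.
  - exact GS.
  - intros A HA. apply Classical_Prop.NNPP. intros Hno. apply Gne.
    apply (GS A); auto. intros t At. apply Hno. exists t. exact At.
  - intros A. destruct (mathcomp.classical.filter.in_ultra_setVsetC A GU); auto.
  - intros n. apply FG. exists n. auto.
Qed.

Section Ultralimits.
Context {I : Type} (u : ultrafilter I).

Lemma almost_and3 A B C : almost u A -> almost u B -> almost u C ->
  almost u (fun i => A i /\ B i /\ C i).
Proof. intros. apply almost_and; auto. apply almost_and; auto. Qed.

Lemma almost_absurd (A : I -> Prop) : almost u A -> (forall i, ~ A i) -> False.
Proof. intros H H'. destruct (almost_exists u _ H) as [i Hi]. exact (H' i Hi). Qed.

Definition ulim (F : I -> R) (L : R) :=
  forall e, 0 < e -> almost u (fun i => Rabs (F i - L) < e).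

(* The ultralimit is the supremum of the [y] with [y <= F i] for almost all [i]. *)
Lemma ulim_exists (F : I -> R) C : almost u (fun i => Rabs (F i) <= C) ->
  exists L, Rabs L <= C /\ ulim F L.
Proof.
  intros HC.
  set (E := fun y => almost u (fun i => y <= F i)).
  assert (E_le_C : forall y, E y -> y <= C).
  { intros y Ey. destruct (Rle_dec y C) as [?|Hn]; auto. exfalso.
    apply (almost_absurd _ (almost_and u _ _ Ey HC)). intros i [H1 H2].
    apply Rabs_le_between in H2. lra. }
  assert (E_mC : E (- C)).
  { apply (almost_impl u _ _ (fun i H => proj1 (proj1 (Rabs_le_between _ _) H)) HC). }
  destruct (completeness E (ex_intro _ C E_le_C) (ex_intro _ _ E_mC)) as [L [HL1 HL2]].
  exists L. split.
  - apply Rabs_le_between. split; [apply HL1, E_mC | apply HL2; exact E_le_C].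
  - intros e He.
    assert (A1 : almost u (fun i => L - e < F i)).
    { destruct (Classical_Prop.classic (exists y, E y /\ L - e < y)) as [[y [Ey Hy]]|Hn].
      - apply (almost_impl u _ _ (fun i H => Rlt_le_trans _ _ _ Hy H) Ey).
      - exfalso. assert (L <= L - e); [|lra]. apply HL2. intros y Ey.
        destruct (Rle_dec y (L - e)); auto. exfalso. apply Hn. exists y. split; auto. lra. }
    assert (A2 : almost u (fun i => F i < L + e)).
    { destruct (almost_or_not u (fun i => L + e / 2 <= F i)) as [H|H].
      - exfalso. assert (L + e/2 <= L) by (apply HL1; exact H). lra.
      - apply (almost_impl u (fun i => ~ (L + e / 2 <= F i))); [intros i Hi; lra|exact H]. }
    apply (almost_impl u (fun i => L - e < F i /\ F i < L + e));
      [intros i [Hi1 Hi2]; apply Rabs_def1; lra|apply almost_and; auto].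
Qed.

Lemma ulim_unique F L1 L2 : ulim F L1 -> ulim F L2 -> L1 = L2.
Proof.
  intros H1 H2. destruct (Req_dec L1 L2) as [?|Hn]; auto. exfalso.
  assert (He : 0 < Rabs (L1 - L2) / 2).
  { apply Rdiv_lt_0_compat; [apply Rabs_pos_lt; lra|lra]. }
  apply (almost_absurd _ (almost_and u _ _ (H1 _ He) (H2 _ He))). intros i [A B].
  assert (Rabs (L1 - L2) <= Rabs (F i - L1) + Rabs (F i - L2)).
  { replace (L1 - L2) with (- (F i - L1) + (F i - L2)) by ring.
    eapply Rle_trans; [apply Rabs_triang|]. rewrite Rabs_Ropp. lra. }
  lra.
Qed.

Lemma ulim_ge F L c : ulim F L -> almost u (fun i => c <= F i) -> c <= L.
Proof.
  intros H1 H2. apply Rnot_lt_le. intros Hn.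
  apply (almost_absurd _ (almost_and u _ _ (H1 (c - L) ltac:(lra)) H2)). intros i [A B].
  apply Rabs_def2 in A. lra.
Qed.

Lemma ulim_le F L c : ulim F L -> almost u (fun i => F i <= c) -> L <= c.
Proof.
  intros H1 H2. apply Rnot_lt_le. intros Hn.
  apply (almost_absurd _ (almost_and u _ _ (H1 (L - c) ltac:(lra)) H2)). intros i [A B].
  apply Rabs_def2 in A. lra.
Qed.

Lemma ulim_ext F G L : (forall i, F i = G i) -> ulim F L -> ulim G L.
Proof.
  intros E H e He. eapply almost_impl; [|exact (H e He)]. intros i Hi. rewrite <- E. exact Hi.
Qed.

Lemma ulim_minus F G L1 L2 : ulim F L1 -> ulim G L2 ->
  ulim (fun i => F i - G i) (L1 - L2).
Proof.
  intros H1 H2 e He.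
  eapply almost_impl; [|exact (almost_and u _ _ (H1 (e/2) ltac:(lra)) (H2 (e/2) ltac:(lra)))].
  intros i [A B]. replace (F i - G i - (L1 - L2)) with ((F i - L1) - (G i - L2)) by ring.
  eapply Rle_lt_trans. apply Rabs_triang. rewrite Rabs_Ropp. lra.
Qed.

End Ultralimits.

Lemma Rabs_sub_triang a b c : Rabs (a - c) <= Rabs (a - b) + Rabs (b - c).
Proof. replace (a - c) with ((a - b) + (b - c)) by ring. apply Rabs_triang. Qed.

Lemma Rabs_sub_triang3 a b c d : Rabs (a - d) <= Rabs (a - b) + Rabs (b - c) + Rabs (c - d).
Proof. pose proof (Rabs_sub_triang a b d). pose proof (Rabs_sub_triang b c d). lra. Qed.

Lemma Rabs_le_sub_add a b : Rabs a <= Rabs (a - b) + Rabs b.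
Proof. pose proof (Rabs_sub_triang a b 0). rewrite !Rminus_0_r in H. exact H. Qed.

Lemma ball_R_iff (x e y : R) : ball x e y <-> Rabs (y - x) < e.
Proof. unfold ball; simpl; unfold AbsRing_ball, abs, minus, plus, opp; simpl. tauto. Qed.

Lemma locally_R_iff (x : R) (P : R -> Prop) :
  locally x P <-> exists d, 0 < d /\ forall y, Rabs (y - x) < d -> P y.
Proof.
  split.
  - intros [e He]. exists e. split; [apply cond_pos|]. intros y Hy. apply He, ball_R_iff, Hy.
  - intros [d [Hd H]]. exists (mkposreal d Hd). intros y Hy. apply H, ball_R_iff, Hy.
Qed.

Definition right_continuous (u : R -> R) a :=
  forall e, 0 < e -> exists d, 0 < d /\ forall t, a < t < a + d -> Rabs (u t - u a) < e.

Lemma right_continuous_filterlim (u : R -> R) a :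
  filterlim u (at_right a) (locally (u a)) <-> right_continuous u a.
Proof.
  split.
  - intros H e He. apply filterlim_locally with (eps := mkposreal e He) in H.
    apply locally_R_iff in H. destruct H as [d [Hd H]].
    exists d. split; auto. intros t Ht. apply ball_R_iff, H; [|lra].
    rewrite Rabs_pos_eq; lra.
  - intros H. apply filterlim_locally. intros [e He]. apply locally_R_iff.
    destruct (H e He) as [d [Hd H']]. exists d. split; auto.
    intros y Hy Hay. apply ball_R_iff, H'. apply Rabs_def2 in Hy. lra.
Qed.

Lemma cont2_eps_delta (g : R -> R -> R) : cont2 g <-> forall t x e, 0 < e ->
  exists d, 0 < d /\ forall t' x', Rabs (t' - t) < d -> Rabs (x' - x) < d ->
     Rabs (g t' x' - g t x) < e.
Proof.
  split.
  - intros H t x e He. specialize (H t x).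
    apply filterlim_locally with (eps := mkposreal e He) in H.
    destruct H as [[d Hd] H]. exists d. split; auto. intros t' x' H1 H2.
    apply ball_R_iff, (H (t', x')). split; apply ball_R_iff; auto.
  - intros H t x. apply filterlim_locally. intros [e He].
    destruct (H t x e He) as [d [Hd H']]. exists (mkposreal d Hd).
    intros [t' x'] [B1 B2]. apply ball_R_iff in B1, B2. apply ball_R_iff, H'; auto.
Qed.

Lemma is_derive_continuous_eps (u : R -> R) t l : is_derive u t l ->
  forall e, 0 < e -> exists d, 0 < d /\ forall s, Rabs (s - t) < d -> Rabs (u s - u t) < e.
Proof.
  intros H e He. assert (C : continuous u t).
  { apply (@ex_derive_continuous R_AbsRing R_NormedModule). exists l. exact H. }
  apply filterlim_locally with (eps := mkposreal e He), locally_R_iff in C.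
  destruct C as [d [Hd C]]. exists d. split; auto.
Qed.

Lemma right_continuous_of_is_derive u t l : is_derive u t l -> right_continuous u t.
Proof.
  intros H e He. destruct (is_derive_continuous_eps u t l H e He) as [d [Hd H']].
  exists d. split; auto. intros s Hs. apply H'. rewrite Rabs_pos_eq; lra.
Qed.

Lemma continuity_pt_eps (u : R -> R) x :
  (forall e, 0 < e -> exists d, 0 < d /\ forall y, Rabs (y - x) < d -> Rabs (u y - u x) < e) ->
  continuity_pt u x.
Proof.
  intros H e He. destruct (H e He) as [d [Hd H']]. exists d. split; auto.
  intros y [_ Hy]. apply H', Hy.
Qed.

(* The MVT is applied to [u] frozen at [u a] left of [a]. *)
Lemma MVT_right_continuous (u du : R -> R) a b : a < b -> right_continuous u a ->
  (forall t, a < t <= b -> is_derive u t (du t)) ->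
  exists c, a <= c <= b /\ u b - u a = du c * (b - a).
Proof.
  intros Hab Hrc Hd.
  set (v := fun t => u (Rmax a t)).
  destruct (MVT_gen v a b du) as [c [Hc Hv]].
  - rewrite Rmin_left, Rmax_right by lra. intros x Hx.
    apply (is_derive_ext_loc u v); [|apply Hd; lra].
    apply locally_R_iff. exists (x - a). split; [lra|]. intros y Hy. apply Rabs_def2 in Hy.
    unfold v. rewrite Rmax_right by lra. reflexivity.
  - rewrite Rmin_left, Rmax_right by lra. intros x Hx. apply continuity_pt_eps. intros e He.
    destruct (Req_dec x a) as [->|Nxa].
    + destruct (Hrc e He) as [d [Hd0 H]]. exists d. split; auto.
      intros y Hy. unfold v. rewrite (Rmax_left a a) by lra.
      destruct (Rle_dec y a).
      * rewrite Rmax_left by lra. rewrite Rminus_eq_0, Rabs_R0. lra.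
      * rewrite Rmax_right by lra. apply H. apply Rabs_def2 in Hy. lra.
    + destruct (is_derive_continuous_eps u x (du x) (Hd x ltac:(lra)) e He) as [d [Hd0 H]].
      exists (Rmin d (x - a)). split; [apply Rmin_glb_lt; lra|].
      intros y Hy. pose proof (Rmin_l d (x-a)). pose proof (Rmin_r d (x-a)).
      apply Rabs_def2 in Hy as Hy'.
      unfold v. rewrite !Rmax_right by lra. apply H. lra.
  - exists c. rewrite Rmin_left, Rmax_right in Hc by lra. split; auto.
    unfold v in Hv. rewrite Rmax_right, Rmax_left in Hv by lra. exact Hv.
Qed.

Lemma continuous_induction (a b : R) (P : R -> Prop) : a <= b -> P a ->
  (forall t, a <= t < b -> (forall s, a <= s <= t -> P s) ->
     exists d, 0 < d /\ forall s, t < s < t + d -> P s) ->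
  (forall t, a < t <= b -> (forall s, a <= s < t -> P s) -> P t) ->
  forall t, a <= t <= b -> P t.
Proof.
  intros Hab Pa Hext Hcl.
  set (E := fun y => a <= y <= b /\ forall s, a <= s <= y -> P s).
  assert (Ea : E a).
  { split; [lra|]. intros s Hs. replace s with a by lra. exact Pa. }
  destruct (completeness E (ex_intro _ b (fun y (Hy : E y) => proj2 (proj1 Hy))) (ex_intro _ a Ea))
    as [L [HL1 HL2]].
  assert (aL : a <= L) by (apply HL1; exact Ea).
  assert (Lb : L <= b) by (apply HL2; intros y [Hy _]; lra).
  assert (below : forall s, a <= s < L -> P s).
  { intros s Hs. destruct (Classical_Prop.classic (exists y, E y /\ s < y)) as [[y [[_ Ey] Hy]]|Hn].
    - apply Ey. lra.
    - exfalso. assert (L <= s); [|lra]. apply HL2. intros y Ey.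
      apply Rnot_lt_le. intros Hy. apply Hn. exists y. split; auto. }
  assert (upto : forall s, a <= s <= L -> P s).
  { intros s Hs. destruct (Req_dec s L) as [->|]; [|apply below; lra].
    destruct (Req_dec L a) as [->|]; [exact Pa|]. apply Hcl; [lra|exact below]. }
  assert (L = b) as <-; [|intros t Ht; apply upto; lra].
  apply Rle_antisym; auto. apply Rnot_lt_le. intros NL.
  destruct (Hext L ltac:(lra) upto) as [d [Hd Hs]].
  assert (Rmin (L + d/2) b <= L); [|unfold Rmin in *; destruct (Rle_dec (L + d/2) b); lra].
  apply HL1. pose proof (Rmin_l (L + d/2) b). pose proof (Rmin_r (L + d/2) b).
  assert (a <= Rmin (L + d/2) b) by (apply Rmin_glb; lra).
  split; [lra|]. intros s Hs'. destruct (Rle_dec s L); [apply upto; lra|apply Hs; lra].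
Qed.

(* Otherwise the ultralimit of points where [|h| > n] would be a point near which [h]
   is unbounded. *)
Lemma bounded_on_square_of_locally_bounded (h : R -> R -> R) (r : R) :
  (forall a b, Rabs a <= r -> Rabs b <= r -> exists d B, 0 < d /\
    forall t x, Rabs t <= r -> Rabs x <= r -> Rabs (t - a) < d -> Rabs (x - b) < d ->
      Rabs (h t x) <= B) ->
  exists B, forall t x, Rabs t <= r -> Rabs x <= r -> Rabs (h t x) <= B.
Proof.
  intros Hloc. apply Classical_Prop.NNPP. intros Hn.
  set (Bs := fun (n : nat) (p : R * R) =>
    Rabs (fst p) <= r /\ Rabs (snd p) <= r /\ INR n < Rabs (h (fst p) (snd p))).
  assert (Hne : forall n, exists p, Bs n p).
  { intros n. apply Classical_Prop.NNPP. intros Hno. apply Hn. exists (INR n).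
    intros t x Ht Hx. apply Rnot_lt_le. intros Hl. apply Hno. exists (t, x). repeat split; auto. }
  assert (Hdec : forall n p, Bs (S n) p -> Bs n p).
  { intros n p (H1 & H2 & H3). repeat split; auto. rewrite S_INR in H3. lra. }
  destruct (ultrafilter_refining_chain _ Bs Hne Hdec) as [u Hu].
  destruct (ulim_exists u fst r) as [a [Ha La]].
  { apply (almost_impl u (Bs 0%nat)); [intros p (H1 & H2 & H3); auto|apply Hu]. }
  destruct (ulim_exists u snd r) as [b [Hb Lb]].
  { apply (almost_impl u (Bs 0%nat)); [intros p (H1 & H2 & H3); auto|apply Hu]. }
  destruct (Hloc a b Ha Hb) as [d [B [Hd HB]]].
  destruct (INR_unbounded B) as [n Hnb].
  apply (almost_absurd u _ (almost_and3 u _ _ _ (La d Hd) (Lb d Hd) (Hu n))).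
  intros p (H1 & H2 & H3 & H4 & H5).
  specialize (HB _ _ H3 H4 H1 H2). lra.
Qed.

(* By continuous induction, [u] does not reach the boundary of the ball of radius [R0]
   before time [b]. *)
Lemma apriori_increment_bound (u du : R -> R) a b B R0 : a <= b -> 0 <= B ->
  right_continuous u a ->
  (forall t, a < t <= b -> is_derive u t (du t)) ->
  (forall t, a <= t <= b -> Rabs (u t) <= R0 -> Rabs (du t) <= B) ->
  Rabs (u a) + B * (b - a) < R0 ->
  forall t, a <= t <= b -> Rabs (u t - u a) <= B * (t - a).
Proof.
  intros Hab HB Hrc Hd Hbd Hst.
  apply (continuous_induction a b (fun t => Rabs (u t - u a) <= B * (t - a))); auto.
  - rewrite Rminus_eq_0, Rabs_R0. lra.
  - intros t Ht HP. specialize (HP t ltac:(lra)).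
    assert (Hut : Rabs (u t) < R0).
    { pose proof (Rabs_le_sub_add (u t) (u a)). nra. }
    assert (Hrct : right_continuous u t).
    { destruct (Req_dec t a) as [->|]; auto.
      apply (right_continuous_of_is_derive u t (du t)), Hd. lra. }
    destruct (Hrct (R0 - Rabs (u t)) ltac:(lra)) as [d [Hd0 Hd1]].
    exists (Rmin d (b - t)). split; [apply Rmin_glb_lt; lra|].
    intros s Hs. pose proof (Rmin_l d (b-t)). pose proof (Rmin_r d (b-t)).
    destruct (MVT_right_continuous u du t s ltac:(lra) Hrct) as [c [Hc Hc']].
    { intros x Hx. apply Hd. lra. }
    assert (Huc : Rabs (u c) <= R0).
    { destruct (Req_dec c t) as [->|Nc]; [lra|].
      specialize (Hd1 c ltac:(lra)). pose proof (Rabs_le_sub_add (u c) (u t)). lra. }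
    specialize (Hbd c ltac:(lra) Huc).
    pose proof (Rabs_sub_triang (u s) (u t) (u a)).
    rewrite Hc', Rabs_mult, (Rabs_pos_eq (s - t)) in H1 by lra.
    assert (Rabs (du c) * (s - t) <= B * (s - t)) by (apply Rmult_le_compat_r; lra).
    lra.
  - intros t Ht HP. apply Rnot_lt_le. intros Hn.
    set (e := Rabs (u t - u a) - B * (t - a)).
    destruct (is_derive_continuous_eps u t (du t) (Hd t Ht) e ltac:(unfold e; lra)) as [d [Hd0 Hd1]].
    set (s := Rmax a (t - d/2)).
    assert (Hs1 : a <= s) by apply Rmax_l.
    assert (Hs2 : t - d/2 <= s) by apply Rmax_r.
    assert (Hs3 : s < t) by (unfold s, Rmax; destruct (Rle_dec a (t - d/2)); lra).
    specialize (HP s ltac:(lra)). specialize (Hd1 s ltac:(apply Rabs_def1; lra)).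
    pose proof (Rabs_sub_triang (u t) (u s) (u a)). rewrite Rabs_minus_sym in Hd1.
    assert (B * (s - a) <= B * (t - a)) by (apply Rmult_le_compat_l; lra).
    unfold e in Hd1. lra.
Qed.

Definition shift (g : R -> R -> R) h := fun t x => g (t + h) x.

Section Solution.
Variables (g : R -> R -> R) (w : R) (u : R -> R).
Hypothesis Hu : solution_Rplus g w u.

Lemma solution_init : u 0 = w.
Proof. exact (proj1 (Hu 1 Rlt_0_1)). Qed.

Lemma solution_derive t : 0 < t -> is_derive u t (g t (u t)).
Proof. intros Ht. destruct (Hu (t + 1) ltac:(lra)) as [_ [_ H]]. apply H. lra. Qed.

Lemma solution_right_continuous t : 0 <= t -> right_continuous u t.
Proof.
  intros Ht. destruct (Req_dec t 0) as [->|].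
  - apply right_continuous_filterlim, (Hu 1 Rlt_0_1).
  - apply (right_continuous_of_is_derive u t (g t (u t))), solution_derive. lra.
Qed.

Lemma solution_shift h : 0 <= h -> solution_Rplus (shift g h) (u h) (fun t => u (h + t)).
Proof.
  intros Hh T HT. split; [|split].
  - simpl. rewrite Rplus_0_r. reflexivity.
  - apply (right_continuous_filterlim (fun t => u (h + t))). intros e He. simpl. rewrite Rplus_0_r.
    destruct (solution_right_continuous h Hh e He) as [d [Hd H]]. exists d. split; auto.
    intros t Ht. apply H. lra.
  - intros t Ht. unfold shift.
    assert (D1 : is_derive u (h + t) (g (h + t) (u (h + t)))) by (apply solution_derive; lra).
    assert (D2 : is_derive (fun t => h + t) t 1) by (auto_derive; auto).
    pose proof (is_derive_comp u (fun t => h + t) t _ _ D1 D2) as D.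
    simpl in D. rewrite Rplus_comm.
    replace (g (h + t) (u (h + t))) with (scal 1 (g (h + t) (u (h + t)))); [exact D|].
    unfold scal; simpl; unfold mult; simpl. ring.
Qed.

Lemma solution_bounded_on X : 0 <= X -> exists R0, forall t, 0 <= t <= X -> Rabs (u t) <= R0.
Proof.
  intros HX.
  destruct (bounded_on_square_of_locally_bounded (fun t _ => u (Rabs t)) X) as [B HB].
  - intros a b Ha Hb. destruct (Req_dec (Rabs a) 0) as [Ea|Na].
    + destruct (solution_right_continuous 0 ltac:(lra) 1 ltac:(lra)) as [d [Hd H]].
      exists d, (Rabs (u 0) + 1). split; auto. intros t x Ht Hx Hta _.
      assert (Rabs t < d).
      { pose proof (Rabs_le_sub_add t a). lra. }
      destruct (Req_dec (Rabs t) 0) as [E0|N0]; [rewrite E0; lra|].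
      pose proof (Rabs_pos t). specialize (H (Rabs t) ltac:(lra)).
      pose proof (Rabs_le_sub_add (u (Rabs t)) (u 0)). lra.
    + pose proof (Rabs_pos a) as Pa.
      destruct (is_derive_continuous_eps u (Rabs a) _ (solution_derive (Rabs a) ltac:(lra)) 1 ltac:(lra))
        as [d [Hd H]].
      exists d, (Rabs (u (Rabs a)) + 1). split; auto. intros t x Ht Hx Hta _.
      specialize (H (Rabs t) (Rle_lt_trans _ _ _ (Rabs_triang_inv2 _ _) Hta)).
      pose proof (Rabs_le_sub_add (u (Rabs t)) (u (Rabs a))). lra.
  - exists B. intros t Ht.
    specialize (HB t 0 ltac:(rewrite Rabs_pos_eq; lra) ltac:(rewrite Rabs_R0; lra)).
    rewrite (Rabs_pos_eq t) in HB by lra. exact HB.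
Qed.

Lemma solution_mean_value s t : 0 <= s -> 0 <= t ->
  exists c, Rmin s t <= c <= Rmax s t /\ u t - u s = g c (u c) * (t - s).
Proof.
  intros Hs Ht. destruct (Rtotal_order s t) as [Hlt|[->|Hgt]].
  - destruct (MVT_right_continuous u (fun c => g c (u c)) s t Hlt
      (solution_right_continuous s Hs)) as [c [Hc E]].
    { intros x Hx. apply solution_derive. lra. }
    exists c. rewrite Rmin_left, Rmax_right by lra. auto.
  - exists t. rewrite Rmin_left, Rmax_left by lra. split; [lra|ring].
  - destruct (MVT_right_continuous u (fun c => g c (u c)) t s Hgt
      (solution_right_continuous t Ht)) as [c [Hc E]].
    { intros x Hx. apply solution_derive. lra. }
    exists c. rewrite Rmin_right, Rmax_left by lra. split; [lra|].
    replace (u t - u s) with (- (u s - u t)) by ring. rewrite E. ring.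
Qed.

Lemma solution_lipschitz_on a b B R1 : 0 <= a ->
  (forall t x, a <= t <= b -> Rabs x <= R1 -> Rabs (g t x) <= B) ->
  (forall t, a <= t <= b -> Rabs (u t) <= R1) ->
  forall s t, a <= s <= b -> a <= t <= b -> Rabs (u t - u s) <= B * Rabs (t - s).
Proof.
  intros Ha Hg Hb s t Hs Ht.
  destruct (solution_mean_value s t ltac:(lra) ltac:(lra)) as [c [Hc E]].
  assert (a <= c <= b).
  { unfold Rmin, Rmax in Hc. destruct (Rle_dec s t); lra. }
  rewrite E, Rabs_mult. apply Rmult_le_compat_r; [apply Rabs_pos|]. apply Hg; auto.
Qed.

End Solution.

Lemma cont2_shift g h : cont2 g -> cont2 (shift g h).
Proof.
  intros Hg. apply cont2_eps_delta. intros t x e He. unfold shift.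
  destruct (proj1 (cont2_eps_delta g) Hg (t + h) x e He) as [d [Hd H]]. exists d. split; auto.
  intros t' x' H1 H2. apply H; auto. replace (t' + h - (t + h)) with (t' - t) by ring. exact H1.
Qed.

Lemma in_Hplus_self f : cont2 f -> in_Hplus f f.
Proof.
  intros Hf. split; [exact Hf|]. intros r eps He. exists 0. split; [lra|]. intros t x _ _.
  rewrite Rplus_0_r, Rminus_eq_0, Rabs_R0. exact He.
Qed.

Lemma in_Hplus_shift f g h : 0 <= h -> in_Hplus f g -> in_Hplus f (shift g h).
Proof.
  intros Hh [Hc Ha]. split; [apply cont2_shift; auto|].
  intros r eps He. destruct (Ha (r + h) eps He) as [h0 [Hh0 H]].
  exists (h0 + h). split; [lra|]. intros t x Ht Hx. unfold shift.
  replace (t + (h0 + h)) with ((t + h) + h0) by ring. apply H.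
  - eapply Rle_trans; [apply Rabs_triang|]. rewrite (Rabs_pos_eq h); lra.
  - pose proof (Rabs_pos x). nra.
Qed.

Lemma solution_unique f g : positively_regular f -> in_Hplus f g -> forall w u v,
  solution_Rplus g w u -> solution_Rplus g w v -> forall t, 0 <= t -> u t = v t.
Proof.
  intros PR Hg w u v Hu Hv t Ht. destruct (PR g Hg w) as [p [Hp Hup]].
  rewrite (Hup (t + 1) u ltac:(lra) (Hu (t+1) ltac:(lra)) t ltac:(lra)).
  rewrite (Hup (t + 1) v ltac:(lra) (Hv (t+1) ltac:(lra)) t ltac:(lra)). reflexivity.
Qed.

(* Solutions cannot cross: once they meet, uniqueness for the shifted equation (which
   is again in [H^+(f)]) makes them coincide from then on. *)
Lemma solution_monotone f g : positively_regular f -> in_Hplus f g -> forall u v wu wv,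
  solution_Rplus g wu u -> solution_Rplus g wv v -> wu <= wv -> forall t, 0 <= t -> u t <= v t.
Proof.
  intros PR Hg u v wu wv Hu Hv Hw b Hb.
  apply (continuous_induction 0 b (fun s => u s <= v s)); auto.
  - rewrite (solution_init _ _ _ Hu), (solution_init _ _ _ Hv). exact Hw.
  - intros s Hs HP. specialize (HP s ltac:(lra)). destruct HP as [Hlt|Heq].
    + destruct (solution_right_continuous _ _ _ Hu s ltac:(lra) ((v s - u s)/2) ltac:(lra))
        as [d1 [Hd1 H1]].
      destruct (solution_right_continuous _ _ _ Hv s ltac:(lra) ((v s - u s)/2) ltac:(lra))
        as [d2 [Hd2 H2]].
      exists (Rmin d1 d2). split; [apply Rmin_glb_lt; lra|]. intros s' Hs'.
      pose proof (Rmin_l d1 d2). pose proof (Rmin_r d1 d2).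
      specialize (H1 s' ltac:(lra)). specialize (H2 s' ltac:(lra)).
      apply Rabs_def2 in H1. apply Rabs_def2 in H2. lra.
    + exists 1. split; [lra|]. intros s' Hs'.
      pose proof (solution_shift _ _ _ Hu s ltac:(lra)) as Su.
      pose proof (solution_shift _ _ _ Hv s ltac:(lra)) as Sv. rewrite Heq in Su.
      pose proof (solution_unique f (shift g s) PR (in_Hplus_shift f g s ltac:(lra) Hg)
        _ _ _ Su Sv (s' - s) ltac:(lra)) as E.
      simpl in E. replace (s + (s' - s)) with s' in E by ring. rewrite E. lra.
  - intros s Hs HP. apply Rnot_lt_le. intros Hn.
    destruct (is_derive_continuous_eps u s _ (solution_derive _ _ _ Hu s ltac:(lra))
      ((u s - v s)/2) ltac:(lra)) as [d1 [Hd1 H1]].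
    destruct (is_derive_continuous_eps v s _ (solution_derive _ _ _ Hv s ltac:(lra))
      ((u s - v s)/2) ltac:(lra)) as [d2 [Hd2 H2]].
    set (s' := Rmax 0 (s - Rmin d1 d2 / 2)).
    pose proof (Rmin_l d1 d2). pose proof (Rmin_r d1 d2).
    assert (0 < Rmin d1 d2) by (apply Rmin_glb_lt; lra).
    assert (A1 : 0 <= s') by apply Rmax_l.
    assert (A2 : s - Rmin d1 d2 / 2 <= s') by apply Rmax_r.
    assert (A3 : s' < s) by (unfold s', Rmax; destruct (Rle_dec 0 (s - Rmin d1 d2 / 2)); lra).
    specialize (HP s' ltac:(lra)).
    specialize (H1 s' ltac:(apply Rabs_def1; lra)). specialize (H2 s' ltac:(apply Rabs_def1; lra)).
    apply Rabs_def2 in H1. apply Rabs_def2 in H2. lra.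
  - lra.
Qed.

Lemma eq_of_left_continuous (u v : R -> R) a b : a < b ->
  (forall t, a <= t < b -> u t = v t) ->
  (forall e, 0 < e -> exists d, 0 < d /\ forall t, b - d < t < b -> Rabs (u t - u b) < e) ->
  (forall e, 0 < e -> exists d, 0 < d /\ forall t, b - d < t < b -> Rabs (v t - v b) < e) ->
  u b = v b.
Proof.
  intros Hab E Hu Hv. destruct (Req_dec (u b) (v b)) as [?|Hn]; auto. exfalso.
  assert (He : 0 < Rabs (u b - v b) / 2) by (apply Rdiv_lt_0_compat; [apply Rabs_pos_lt|]; lra).
  destruct (Hu _ He) as [d1 [Hd1 H1]]. destruct (Hv _ He) as [d2 [Hd2 H2]].
  pose proof (Rmin_l d1 d2). pose proof (Rmin_r d1 d2).
  assert (0 < Rmin d1 d2) by (apply Rmin_glb_lt; lra).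
  set (t := Rmax a (b - Rmin d1 d2 / 2)).
  assert (a <= t) by apply Rmax_l.
  assert (b - Rmin d1 d2 / 2 <= t) by apply Rmax_r.
  assert (t < b) by (unfold t, Rmax; destruct (Rle_dec a (b - Rmin d1 d2 / 2)); lra).
  specialize (H1 t ltac:(lra)). specialize (H2 t ltac:(lra)). rewrite E in H1 by lra.
  pose proof (Rabs_sub_triang (u b) (v t) (v b)). rewrite Rabs_minus_sym in H1. lra.
Qed.

Section ContinuousDependence.
Variables (I : Type) (U : ultrafilter I) (g : R -> R -> R) (w : R) (Y : R -> R).
Hypothesis HY : solution_Rplus g w Y.
Hypothesis HYu : forall T psi, 0 < T -> solution_on g w T psi ->
  forall t, 0 <= t < T -> psi t = Y t.
Variables (gi : I -> R -> R -> R) (yi : I -> R -> R).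
Hypothesis Hsol : almost U (fun i => solution_Rplus (gi i) (yi i 0) (yi i)).
Hypothesis Hinit : ulim U (fun i => yi i 0) w.
Hypothesis Hconv : forall t0 x0 e, 0 < e -> exists d, 0 < d /\ almost U (fun i => forall t x,
  Rabs (t - t0) < d -> Rabs (x - x0) < d -> Rabs (gi i t x - g t0 x0) < e).
Hypothesis Hbound : forall r, exists B, almost U (fun i =>
  forall t x, 0 <= t <= r -> Rabs x <= r -> Rabs (gi i t x) <= B).

Definition window_bounded xi B R1 := almost U (fun i =>
  solution_Rplus (gi i) (yi i 0) (yi i) /\
  (forall t x, 0 <= t <= xi -> Rabs x <= R1 -> Rabs (gi i t x) <= B) /\
  (forall t, 0 <= t <= xi -> Rabs (yi i t) <= R1)).

(* An arbitrary value where the ultralimit does not exist. *)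
Definition ulim_path t := epsilon (inhabits 0) (fun L => ulim U (fun i => yi i t) L).

Section Window.
Variables (xi B R1 : R).
Hypotheses (Hxi : 0 < xi) (HB : 0 <= B) (Hwin : window_bounded xi B R1).

Local Notation Z := ulim_path.

Lemma ulim_path_spec t : 0 <= t <= xi -> ulim U (fun i => yi i t) (Z t).
Proof.
  intros Ht. unfold ulim_path. apply epsilon_spec.
  destruct (ulim_exists U (fun i => yi i t) R1) as [L [_ HL]]; [|exists L; exact HL].
  eapply almost_impl; [|exact Hwin]. intros i (_ & _ & Hi). apply Hi, Ht.
Qed.

Lemma ulim_path_lipschitz s t : 0 <= s <= xi -> 0 <= t <= xi ->
  Rabs (Z t - Z s) <= B * Rabs (t - s).
Proof.
  intros Hs Ht. apply Rnot_lt_le. intros Hc.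
  set (e := (Rabs (Z t - Z s) - B * Rabs (t - s)) / 3).
  assert (He : 0 < e) by (unfold e; lra).
  apply (almost_absurd U _ (almost_and3 U _ _ _ Hwin (ulim_path_spec t Ht e He)
    (ulim_path_spec s Hs e He))).
  intros i [[Hsi [Hg Hb]] [A1 A2]].
  pose proof (solution_lipschitz_on _ _ _ Hsi 0 xi B R1 ltac:(lra) Hg Hb s t Hs Ht).
  pose proof (Rabs_sub_triang3 (Z t) (yi i t) (yi i s) (Z s)) as T.
  rewrite (Rabs_minus_sym (Z t) (yi i t)) in T. unfold e in *. lra.
Qed.

Lemma ulim_path_init : Z 0 = w.
Proof. apply (ulim_unique U (fun i => yi i 0)); [apply ulim_path_spec; lra|exact Hinit]. Qed.

Lemma ulim_path_difference_quotient x h e d : 0 <= x <= xi -> 0 <= x + h <= xi -> h <> 0 ->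
  0 < e -> almost U (fun i => forall t y,
    Rabs (t - x) < d -> Rabs (y - Z x) < d -> Rabs (gi i t y - g x (Z x)) < e) ->
  Rabs h < d / 2 -> B * Rabs h < d / 2 ->
  Rabs ((Z (x + h) - Z x) / h - g x (Z x)) < 3 * e.
Proof.
  intros Hx Hxh Hh0 He Hc D1 D2.
  assert (Hah : 0 < Rabs h) by (apply Rabs_pos_lt; exact Hh0).
  assert (He1 : 0 < Rmin (d/2) (e * Rabs h)) by (apply Rmin_glb_lt; nra).
  assert (He2 : 0 < e * Rabs h) by nra.
  destruct (almost_exists U _ (almost_and U _ _
    (almost_and3 U _ _ _ Hwin Hc (ulim_path_spec x Hx _ He1)) (ulim_path_spec (x + h) Hxh _ He2)))
    as [i [[[Hs [Hg Hb]] [Hci Hzx]] Hzxh]].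
  pose proof (Rmin_l (d/2) (e * Rabs h)). pose proof (Rmin_r (d/2) (e * Rabs h)).
  destruct (solution_mean_value _ _ _ Hs x (x + h) ltac:(lra) ltac:(lra)) as [c [Hc' Ec]].
  replace (x + h - x) with h in Ec by ring.
  assert (Hcx : 0 <= c <= xi /\ Rabs (c - x) <= Rabs h).
  { pose proof (Rle_abs h). pose proof (Rle_abs (- h)). rewrite Rabs_Ropp in *.
    unfold Rmin, Rmax in Hc'. destruct (Rle_dec x (x + h)); split; try apply Rabs_le; lra. }
  destruct Hcx as [Hc0 Hcx].
  pose proof (solution_lipschitz_on _ _ _ Hs 0 xi B R1 ltac:(lra) Hg Hb x c Hx Hc0) as Hyc.
  assert (B * Rabs (c - x) <= B * Rabs h) by (apply Rmult_le_compat_l; lra).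
  assert (Hgc : Rabs (gi i c (yi i c) - g x (Z x)) < e).
  { apply Hci; [lra|]. pose proof (Rabs_sub_triang (yi i c) (yi i x) (Z x)). lra. }
  assert (Eq : (Z (x + h) - Z x) / h - g x (Z x) =
    ((Z (x + h) - yi i (x + h)) - (Z x - yi i x)) / h + (gi i c (yi i c) - g x (Z x))).
  { replace (Z (x + h) - Z x) with
      (((Z (x + h) - yi i (x + h)) - (Z x - yi i x)) + gi i c (yi i c) * h) by (rewrite <- Ec; ring).
    field. exact Hh0. }
  rewrite Eq. eapply Rle_lt_trans; [apply Rabs_triang|].
  unfold Rdiv. rewrite Rabs_mult, Rabs_inv.
  assert (Rabs ((Z (x + h) - yi i (x + h)) - (Z x - yi i x)) < 2 * e * Rabs h).
  { eapply Rle_lt_trans; [apply Rabs_triang|]. rewrite Rabs_Ropp.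
    rewrite (Rabs_minus_sym (Z (x + h))), (Rabs_minus_sym (Z x)). lra. }
  assert (Rabs ((Z (x + h) - yi i (x + h)) - (Z x - yi i x)) * / Rabs h < 2 * e).
  { apply (Rmult_lt_reg_r (Rabs h)); auto. rewrite Rmult_assoc, Rinv_l by lra. lra. }
  lra.
Qed.

Lemma ulim_path_derive x : 0 < x < xi -> is_derive Z x (g x (Z x)).
Proof.
  intros Hx. apply is_derive_Reals. intros eps Heps.
  destruct (Hconv x (Z x) (eps / 4) ltac:(lra)) as [d [Hd Hc]].
  assert (HdB : 0 < d / (2 * (B + 1))) by (apply Rdiv_lt_0_compat; lra).
  set (del := Rmin (Rmin (d/2) (d/(2*(B+1)))) (Rmin x (xi - x))).
  assert (Hdel : 0 < del) by (unfold del; apply Rmin_glb_lt; apply Rmin_glb_lt; lra).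
  exists (mkposreal del Hdel). intros h Hh0 Hh. simpl in Hh.
  pose proof (Rmin_l (Rmin (d/2) (d/(2*(B+1)))) (Rmin x (xi - x))).
  pose proof (Rmin_r (Rmin (d/2) (d/(2*(B+1)))) (Rmin x (xi - x))).
  pose proof (Rmin_l (d/2) (d/(2*(B+1)))). pose proof (Rmin_r (d/2) (d/(2*(B+1)))).
  pose proof (Rmin_l x (xi - x)). pose proof (Rmin_r x (xi - x)). fold del in H, H0.
  assert (D : B * Rabs h < d / 2).
  { assert (E : d / (2 * (B+1)) * (2 * (B + 1)) = d) by (field; lra).
    assert (B * Rabs h <= B * (d / (2 * (B + 1)))) by (apply Rmult_le_compat_l; lra).
    nra. }
  apply Rabs_def2 in Hh as Hh'.
  pose proof (ulim_path_difference_quotient x h (eps / 4) d ltac:(lra) ltac:(lra) Hh0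
    ltac:(lra) Hc ltac:(lra) D). lra.
Qed.

Lemma ulim_path_solution_on : solution_on g w xi Z.
Proof.
  split; [exact ulim_path_init|split; [|exact ulim_path_derive]].
  apply right_continuous_filterlim. intros e He.
  exists (Rmin xi (e / (B + 1))). split; [apply Rmin_glb_lt; auto; apply Rdiv_lt_0_compat; lra|].
  intros t Ht. pose proof (Rmin_l xi (e / (B + 1))). pose proof (Rmin_r xi (e / (B + 1))).
  pose proof (ulim_path_lipschitz 0 t ltac:(lra) ltac:(lra)).
  rewrite Rminus_0_r, (Rabs_pos_eq t) in H1 by lra.
  assert (E : e / (B + 1) * (B + 1) = e) by (field; lra).
  assert (B * t <= B * (e / (B + 1))) by (apply Rmult_le_compat_l; lra).
  nra.
Qed.

Lemma ulim_path_eq_solution t : 0 <= t <= xi -> Z t = Y t.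
Proof.
  intros Ht. pose proof (HYu xi Z Hxi ulim_path_solution_on) as E.
  destruct (Req_dec t xi) as [->|]; [|apply E; lra].
  apply (eq_of_left_continuous Z Y 0 xi Hxi E).
  - intros e He. exists (Rmin xi (e / (B + 1))).
    split; [apply Rmin_glb_lt; auto; apply Rdiv_lt_0_compat; lra|].
    intros s Hs. pose proof (Rmin_l xi (e / (B + 1))). pose proof (Rmin_r xi (e / (B + 1))).
    pose proof (ulim_path_lipschitz xi s ltac:(lra) ltac:(lra)).
    rewrite (Rabs_left1 (s - xi)) in H1 by lra.
    assert (E' : e / (B + 1) * (B + 1) = e) by (field; lra).
    assert (B * - (s - xi) <= B * (e / (B + 1))) by (apply Rmult_le_compat_l; lra).
    nra.
  - intros e He.
    destruct (is_derive_continuous_eps Y xi _ (solution_derive _ _ _ HY xi Hxi) e He) as [d [Hd H]].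
    exists d. split; auto. intros s Hs. apply H. rewrite Rabs_left1; lra.
Qed.

End Window.

Lemma ulim_on_window xi B R1 : 0 <= xi -> 0 <= B -> window_bounded xi B R1 ->
  forall t, 0 <= t <= xi -> ulim U (fun i => yi i t) (Y t).
Proof.
  intros Hxi HB Hwin t Ht. destruct (Req_dec xi 0) as [->|].
  - replace t with 0 by lra. rewrite (solution_init _ _ _ HY). exact Hinit.
  - rewrite <- (ulim_path_eq_solution xi B R1 ltac:(lra) HB Hwin t Ht).
    apply (ulim_path_spec xi B R1 Hwin t Ht).
Qed.

(* The approximating solutions start a step within [1/2] of [Y xi], so they stay in
   the ball of radius [R0 + 1], where the fields are bounded by [B], for a time [1/(4B)]. *)
Lemma window_extend X xi xi' B R0 : 0 <= xi <= xi' -> xi' <= X -> 0 <= B ->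
  B * (xi' - xi) < 1/4 -> Rabs (Y xi) <= R0 ->
  almost U (fun i => forall t x, 0 <= t <= X -> Rabs x <= R0 + 1 -> Rabs (gi i t x) <= B) ->
  window_bounded xi B (R0 + 1) -> window_bounded xi' B (R0 + 1).
Proof.
  intros Hxx HxX HB Hstep HYxi Hgb Hwin.
  pose proof (ulim_on_window xi B (R0 + 1) ltac:(lra) HB Hwin xi ltac:(lra) (1/2) ltac:(lra)) as Lxi.
  eapply almost_impl; [|exact (almost_and3 U _ _ _ Hwin Hgb Lxi)].
  intros i [[Hs [_ Hb]] [Hg Hi]]. cbv beta in Hi.
  assert (Hg' : forall t x, 0 <= t <= xi' -> Rabs x <= R0 + 1 -> Rabs (gi i t x) <= B).
  { intros t x Ht. apply Hg. lra. }
  split; [exact Hs|split; [exact Hg'|]].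
  assert (Hyxi : Rabs (yi i xi) <= R0 + 1/2).
  { pose proof (Rabs_le_sub_add (yi i xi) (Y xi)). lra. }
  intros t Ht. destruct (Rle_dec t xi) as [Hle|Hgt]; [apply Hb; lra|].
  assert (Bt : Rabs (yi i t - yi i xi) <= B * (t - xi)).
  { apply (apriori_increment_bound (yi i) (fun t => gi i t (yi i t)) xi xi' B (R0 + 1)); try lra.
    - apply (solution_right_continuous _ _ _ Hs). lra.
    - intros s Hs'. apply (solution_derive _ _ _ Hs). lra.
    - intros s Hs' Hys. apply Hg'; [lra|exact Hys]. }
  assert (B * (t - xi) <= B * (xi' - xi)) by (apply Rmult_le_compat_l; lra).
  pose proof (Rabs_le_sub_add (yi i t) (yi i xi)). lra.
Qed.

Lemma ulim_solution X : 0 <= X -> ulim U (fun i => yi i X) (Y X).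
Proof.
  intros HX.
  destruct (solution_bounded_on _ _ _ HY X HX) as [R0 HR0].
  destruct (Hbound (Rmax X (R0 + 1))) as [B0 HB0].
  set (B := Rmax B0 0).
  assert (HB : 0 <= B) by apply Rmax_r.
  assert (Hgb : almost U (fun i => forall t x, 0 <= t <= X -> Rabs x <= R0 + 1 ->
    Rabs (gi i t x) <= B)).
  { eapply almost_impl; [|exact HB0]. intros i Hi t x Ht Hx.
    eapply Rle_trans; [|apply Rmax_l]. pose proof (Rmax_l X (R0 + 1)).
    pose proof (Rmax_r X (R0 + 1)). apply Hi; lra. }
  set (h0 := 1 / (4 * (B + 1))).
  assert (Hh0 : 0 < h0) by (unfold h0; apply Rdiv_lt_0_compat; lra).
  assert (Hh0B : B * h0 < 1/4).
  { assert (E : h0 * (4 * (B + 1)) = 1) by (unfold h0; field; lra). nra. }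
  assert (Step : forall n, window_bounded (Rmin X (INR n * h0)) B (R0 + 1)).
  { induction n as [|n IH].
    - simpl. rewrite Rmult_0_l, Rmin_right by lra.
      eapply almost_impl; [|exact (almost_and3 U _ _ _ Hsol Hgb (Hinit 1 ltac:(lra)))].
      intros i [Hs [Hb Hi]]. split; [exact Hs|split].
      + intros t x Ht. apply Hb. lra.
      + intros t Ht. replace t with 0 by lra. pose proof (HR0 0 ltac:(lra)).
        rewrite (solution_init _ _ _ HY) in H. pose proof (Rabs_le_sub_add (yi i 0) w). lra.
    - apply (window_extend X (Rmin X (INR n * h0))); auto; try apply Rmin_l.
      + rewrite S_INR. split; [apply Rmin_glb; [lra|pose proof (pos_INR n); nra]|].
        unfold Rmin. destruct (Rle_dec X (INR n * h0)), (Rle_dec X ((INR n + 1) * h0)); nra.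
      + rewrite S_INR. assert (Rmin X ((INR n + 1) * h0) - Rmin X (INR n * h0) <= h0).
        { unfold Rmin. destruct (Rle_dec X (INR n * h0)), (Rle_dec X ((INR n + 1) * h0)); nra. }
        assert (0 <= Rmin X ((INR n + 1) * h0) - Rmin X (INR n * h0)).
        { unfold Rmin. destruct (Rle_dec X (INR n * h0)), (Rle_dec X ((INR n + 1) * h0)); nra. }
        nra.
      + apply HR0. split; [apply Rmin_glb; [lra|pose proof (pos_INR n); nra]|apply Rmin_l]. }
  destruct (INR_unbounded (X / h0)) as [n Hn].
  assert (E : Rmin X (INR n * h0) = X).
  { apply Rmin_left. assert (X / h0 * h0 = X) by (field; lra). nra. }
  apply (ulim_on_window X B (R0 + 1) HX HB); [rewrite <- E; apply Step|lra].
Qed.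

End ContinuousDependence.

Section Phase.
Variable tau : R.
Hypothesis Htau : 0 < tau.

Definition phase t := t - IZR (Int_part (t / tau)) * tau.

Lemma phase_bounds t : 0 <= phase t < tau.
Proof.
  unfold phase. destruct (base_Int_part (t / tau)) as [H1 H2].
  assert (E : t / tau * tau = t) by (field; lra).
  split.
  - assert (IZR (Int_part (t / tau)) * tau <= t / tau * tau) by (apply Rmult_le_compat_r; lra).
    lra.
  - assert ((t / tau - 1) * tau < IZR (Int_part (t / tau)) * tau) by (apply Rmult_lt_compat_r; lra).
    lra.
Qed.

Definition near_phase T s rho := exists m : Z, Rabs (T - IZR m * tau - s) < rho.

Lemma near_phase_of_phase t s rho : Rabs (phase t - s) < rho -> near_phase t s rho.
Proof. intros H. exists (Int_part (t / tau)). exact H. Qed.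

Lemma near_phase_add_periods T s rho n : near_phase T s rho -> near_phase (T + INR n * tau) s rho.
Proof.
  intros [m Hm]. exists (m + Z.of_nat n)%Z. rewrite plus_IZR, <- INR_IZR_INZ.
  replace (T + INR n * tau - (IZR m + INR n) * tau - s) with (T - IZR m * tau - s) by ring.
  exact Hm.
Qed.

Lemma near_phase_weaken T s r1 r2 : r1 <= r2 -> near_phase T s r1 -> near_phase T s r2.
Proof. intros H [m Hm]. exists m. lra. Qed.

Lemma phase_close_period_multiple t t' s r : t' + 2 * tau <= t ->
  Rabs (phase t - s) < r -> Rabs (phase t' - s) < r ->
  exists k : nat, Rabs (t - (t' + INR (S k) * tau)) < 2 * r.
Proof.
  intros Htt Ht Ht'.
  set (k := (Int_part (t / tau) - Int_part (t' / tau))%Z).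
  assert (Ek : t - t' = phase t - phase t' + IZR k * tau) by (unfold k, phase; rewrite minus_IZR; ring).
  pose proof (phase_bounds t). pose proof (phase_bounds t').
  assert (Hk : (1 < k)%Z).
  { apply lt_IZR. apply (Rmult_lt_reg_r tau); lra. }
  exists (Z.to_nat (k - 1)).
  rewrite S_INR, INR_IZR_INZ, Z2Nat.id, minus_IZR by lia.
  replace (t - (t' + (IZR k - IZR 1 + 1) * tau)) with ((phase t - s) - (phase t' - s)) by lra.
  eapply Rle_lt_trans; [apply Rabs_triang|]. rewrite Rabs_Ropp. lra.
Qed.

Variable P : R -> R -> R.
Hypothesis Hper : forall t x, P (t + tau) x = P t x.

Lemma periodic_nat n t x : P (t + INR n * tau) x = P t x.
Proof.
  induction n; [simpl; rewrite Rmult_0_l, Rplus_0_r; reflexivity|].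
  rewrite S_INR. replace (t + (INR n + 1) * tau) with ((t + INR n * tau) + tau) by ring.
  rewrite Hper. exact IHn.
Qed.

Lemma periodic_Z k t x : P (t + IZR k * tau) x = P t x.
Proof.
  destruct (Z.le_gt_cases 0 k) as [Hk|Hk].
  - rewrite <- (Z2Nat.id k Hk), <- INR_IZR_INZ. apply periodic_nat.
  - replace (IZR k) with (- IZR (- k)) by (rewrite opp_IZR; ring).
    rewrite <- (Z2Nat.id (- k)) by lia. rewrite <- INR_IZR_INZ.
    rewrite <- (periodic_nat (Z.to_nat (- k)) (t + - INR (Z.to_nat (- k)) * tau) x).
    f_equal. ring.
Qed.

Lemma periodic_eq_phase t x : P t x = P (phase t) x.
Proof. rewrite <- (periodic_Z (Int_part (t / tau)) (phase t) x). f_equal. unfold phase; ring. Qed.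

Lemma periodic_bounded : cont2 P -> forall r, exists B, forall t x, Rabs x <= r -> Rabs (P t x) <= B.
Proof.
  intros HP r. destruct (bounded_on_square_of_locally_bounded P (Rmax r tau)) as [B HB].
  - intros a b _ _. destruct (proj1 (cont2_eps_delta P) HP a b 1 ltac:(lra)) as [d [Hd H]].
    exists d, (Rabs (P a b) + 1). split; auto. intros t x _ _ H1 H2. specialize (H t x H1 H2).
    pose proof (Rabs_le_sub_add (P t x) (P a b)). lra.
  - exists B. intros t x Hx. rewrite periodic_eq_phase. apply HB.
    + pose proof (phase_bounds t). pose proof (Rmax_r r tau). rewrite Rabs_pos_eq; lra.
    + pose proof (Rmax_l r tau). lra.
Qed.

End Phase.

Lemma Rinv_INR_succ_eventually_lt r : 0 < r ->
  exists n : nat, forall m, (n <= m)%nat -> / (INR m + 1) < r.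
Proof.
  intros Hr. destruct (INR_unbounded (/ r)) as [n Hn]. exists n. intros m Hm.
  apply le_INR in Hm. pose proof (pos_INR m).
  apply (Rmult_lt_reg_l (INR m + 1)); [lra|]. rewrite Rinv_r by lra.
  assert (/ r * r = 1) by (field; lra). nra.
Qed.

Section AsymptoticallyPeriodic.
Variables (tau : R) (f P Q : R -> R -> R).
Hypotheses (Htau : 0 < tau) (Hf : cont2 f) (HP : cont2 P).
Hypothesis HfPQ : forall t x, f t x = P t x + Q t x.
Hypothesis Hper : forall t x, P (t + tau) x = P t x.
Hypothesis HQ : forall r eps, 0 < eps ->
  exists T0, forall t x, T0 <= t -> Rabs x <= r -> Rabs (Q t x) < eps.
Hypothesis PR : positively_regular f.

Local Notation near_phase := (near_phase tau).

Lemma in_Hplus_shift_periodic_part s : 0 <= s -> in_Hplus f (shift P s).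
Proof.
  intros Hs. split; [apply cont2_shift; auto|].
  intros r eps He. destruct (HQ r eps He) as [T0 HT0].
  destruct (INR_unbounded ((Rabs T0 + r) / tau)) as [n Hn].
  exists (INR n * tau + s). split; [pose proof (pos_INR n); nra|].
  intros t x Ht Hx. unfold shift. rewrite HfPQ.
  replace (t + (INR n * tau + s)) with ((t + s) + INR n * tau) at 1 by ring.
  rewrite (periodic_nat tau P Hper).
  replace (P (t + s) x + Q (t + (INR n * tau + s)) x - P (t + s) x)
    with (Q (t + (INR n * tau + s)) x) by ring.
  apply HT0; auto.
  assert ((Rabs T0 + r) / tau * tau = Rabs T0 + r) by (field; lra).
  pose proof (Rle_abs T0). apply Rabs_le_between in Ht. nra.
Qed.

Section Limits.
Context {I : Type} (U : ultrafilter I) (T : I -> R) (s : R).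
Hypothesis HT : forall K, almost U (fun i => K <= T i).
Hypothesis Hs : forall rho, 0 < rho -> almost U (fun i => near_phase (T i) s rho).

Lemma shift_ulim_locally_uniform t0 x0 e : 0 < e -> exists d, 0 < d /\ almost U (fun i =>
  forall t x, Rabs (t - t0) < d -> Rabs (x - x0) < d ->
    Rabs (shift f (T i) t x - shift P s t0 x0) < e).
Proof.
  intros He.
  destruct (proj1 (cont2_eps_delta P) HP (t0 + s) x0 (e/2) ltac:(lra)) as [d1 [Hd1 Hc]].
  destruct (HQ (Rabs x0 + d1) (e/2) ltac:(lra)) as [T0 HT0].
  exists (d1/2). split; [lra|].
  eapply almost_impl; [|exact (almost_and U _ _ (HT (T0 + Rabs t0 + d1)) (Hs (d1/2) ltac:(lra)))].
  intros i [HKi [m Hm]] t x Ht Hx. unfold shift. rewrite HfPQ.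
  replace (t + T i) with ((t + (T i - IZR m * tau)) + IZR m * tau) at 1 by ring.
  rewrite (periodic_Z tau P Hper).
  assert (A1 : Rabs (P (t + (T i - IZR m * tau)) x - P (t0 + s) x0) < e/2).
  { apply Hc; [|lra].
    replace (t + (T i - IZR m * tau) - (t0 + s)) with ((t - t0) + (T i - IZR m * tau - s)) by ring.
    eapply Rle_lt_trans; [apply Rabs_triang|]. lra. }
  assert (A2 : Rabs (Q (t + T i) x) < e/2).
  { apply HT0.
    - apply Rabs_def2 in Ht. pose proof (Rle_abs (- t0)). rewrite Rabs_Ropp in H. lra.
    - pose proof (Rabs_le_sub_add x x0). lra. }
  replace (P (t + (T i - IZR m * tau)) x + Q (t + T i) x - P (t0 + s) x0)
    with ((P (t + (T i - IZR m * tau)) x - P (t0 + s) x0) + Q (t + T i) x) by ring.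
  eapply Rle_lt_trans; [apply Rabs_triang|]. lra.
Qed.

Lemma shift_ulim_bounded r : exists B, almost U (fun i =>
  forall t x, 0 <= t <= r -> Rabs x <= r -> Rabs (shift f (T i) t x) <= B).
Proof.
  destruct (periodic_bounded tau Htau P Hper HP r) as [B1 HB1].
  destruct (HQ r 1 ltac:(lra)) as [T0 HT0].
  exists (B1 + 1). eapply almost_impl; [|exact (HT T0)]. intros i Hi t x Ht Hx.
  unfold shift. rewrite HfPQ. eapply Rle_trans; [apply Rabs_triang|].
  pose proof (HB1 (t + T i) x Hx). pose proof (HT0 (t + T i) x ltac:(lra) Hx). lra.
Qed.

(* Along times tending to infinity with phases converging to [s], the equations
   [y' = f(t + T, y)] converge to [y' = P(t + s, y)]. *)
Lemma ulim_shifted_solution (yi : I -> R -> R) z Y : 0 <= s ->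
  solution_Rplus (shift P s) z Y ->
  almost U (fun i => solution_Rplus (shift f (T i)) (yi i 0) (yi i)) ->
  ulim U (fun i => yi i 0) z ->
  forall t, 0 <= t -> ulim U (fun i => yi i t) (Y t).
Proof.
  intros Hs0 HY Hsol Hinit.
  pose proof (in_Hplus_shift_periodic_part s Hs0) as Hg.
  destruct (PR _ Hg z) as [Y' [HY' HYu]].
  apply (ulim_solution I U (shift P s) z Y HY) with (gi := fun i => shift f (T i)); auto.
  - intros T' psi HT' Hpsi t Ht. rewrite (HYu T' psi HT' Hpsi t Ht).
    symmetry. apply (solution_unique f _ PR Hg z Y Y' HY HY'). lra.
  - exact shift_ulim_locally_uniform.
  - exact shift_ulim_bounded.
Qed.

End Limits.

(* Otherwise an ultrafilter on counterexamples [(T, phi)] with [T -> oo], phase of [T]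
   tending to [s] and [phi 0 -> z] would give [Y tau <= z + c]. *)
Lemma trapping_neighbourhood s z Y c : 0 <= s -> solution_Rplus (shift P s) z Y ->
  z + c < Y tau ->
  exists eta rho K, 0 < eta /\ 0 < rho /\ 0 <= K /\ forall T, K <= T -> near_phase T s rho ->
    forall phi, solution_Rplus (shift f T) (z - eta) phi -> z + c < phi tau.
Proof.
  intros Hs0 HY HYc. apply Classical_Prop.NNPP; intro Hno.
  set (Bs := fun (n : nat) (p : R * (R -> R)) => exists m, (n <= m)%nat /\ INR m <= fst p /\
    near_phase (fst p) s (/ (INR m + 1)) /\
    solution_Rplus (shift f (fst p)) (z - / (INR m + 1)) (snd p) /\ snd p tau <= z + c).
  assert (Hne : forall n, exists p, Bs n p).
  { intros n. apply Classical_Prop.NNPP. intros Hn. apply Hno.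
    pose proof (pos_INR n). assert (0 < / (INR n + 1)) by (apply Rinv_0_lt_compat; lra).
    exists (/ (INR n + 1)), (/ (INR n + 1)), (INR n). do 3 (split; [auto|]).
    intros T HT Hnr phi Hphi. apply Rnot_le_lt. intros Hl. apply Hn. exists (T, phi).
    exists n. simpl. auto. }
  assert (Hdec : forall n p, Bs (S n) p -> Bs n p).
  { intros n p [m [Hm H]]. exists m. split; auto. lia. }
  destruct (ultrafilter_refining_chain _ Bs Hne Hdec) as [V HV].
  assert (HK : forall K, almost V (fun p => K <= fst p)).
  { intros K. destruct (INR_unbounded K) as [n Hn]. eapply almost_impl; [|exact (HV n)].
    intros p [m [Hm [H1 _]]]. apply le_INR in Hm. lra. }
  assert (Hnear : forall rho, 0 < rho -> almost V (fun p => near_phase (fst p) s rho)).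
  { intros rho Hr. destruct (Rinv_INR_succ_eventually_lt rho Hr) as [n Hn].
    eapply almost_impl; [|exact (HV n)]. intros p [m [Hm [_ [H1 _]]]].
    eapply near_phase_weaken; [|exact H1]. left. apply Hn, Hm. }
  assert (Hsol : almost V (fun p => solution_Rplus (shift f (fst p)) (snd p 0) (snd p))).
  { eapply almost_impl; [|exact (HV 0%nat)]. intros p [m [_ [_ [_ [H1 _]]]]].
    rewrite (solution_init _ _ _ H1). exact H1. }
  assert (Hinit : ulim V (fun p => snd p 0) z).
  { intros e He. destruct (Rinv_INR_succ_eventually_lt e He) as [n Hn].
    eapply almost_impl; [|exact (HV n)].
    intros p [m [Hm [_ [_ [H1 _]]]]]. rewrite (solution_init _ _ _ H1).
    replace (z - / (INR m + 1) - z) with (- / (INR m + 1)) by ring. rewrite Rabs_Ropp.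
    pose proof (pos_INR m). rewrite Rabs_pos_eq; [apply Hn; auto|].
    left. apply Rinv_0_lt_compat. lra. }
  pose proof (ulim_shifted_solution V fst s HK Hnear snd z Y Hs0 HY Hsol Hinit tau ltac:(lra)) as L.
  assert (Y tau <= z + c); [|lra].
  apply (ulim_le V (fun p => snd p tau)); auto. eapply almost_impl; [|exact (HV 0%nat)].
  intros p [m [_ [_ [_ [_ H1]]]]]. exact H1.
Qed.

(* By the comparison principle a solution that enters the trap at a time of the right
   phase is above [z + c] one period later, hence in the trap again. *)
Lemma trapped_orbit s z eta rho K c psi u0 : 0 <= c ->
  (forall T, K <= T -> near_phase T s rho ->
    forall phi, solution_Rplus (shift f T) (z - eta) phi -> z + c < phi tau) ->
  0 <= K -> 0 < eta -> solution_Rplus f u0 psi ->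
  forall k T, K <= T -> near_phase T s rho -> z - eta <= psi T ->
    z + c < psi (T + INR (S k) * tau).
Proof.
  intros Hc Trap HK Heta Hpsi.
  assert (Step : forall T, K <= T -> near_phase T s rho -> z - eta <= psi T -> z + c < psi (T + tau)).
  { intros T HT Hn Hp.
    pose proof (in_Hplus_shift f f T ltac:(lra) (in_Hplus_self f Hf)) as Hg.
    destruct (PR _ Hg (z - eta)) as [phi [Hphi _]].
    pose proof (solution_monotone f _ PR Hg phi (fun x => psi (T + x)) (z - eta) (psi T) Hphi
      (solution_shift _ _ _ Hpsi T ltac:(lra)) Hp tau ltac:(lra)) as O.
    pose proof (Trap T HT Hn phi Hphi). cbv beta in O. rewrite Rplus_comm. lra. }
  induction k as [|k IH]; intros T HT Hn Hp.
  - simpl. rewrite Rmult_1_l. apply Step; auto.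
  - pose proof (IH T HT Hn Hp) as H1. pose proof (pos_INR (S k)).
    replace (T + INR (S (S k)) * tau) with (T + INR (S k) * tau + tau)
      by (rewrite (S_INR (S k)); ring).
    apply Step; [nra|apply near_phase_add_periods; auto|lra].
Qed.

Lemma solution_eventually_lipschitz psi u0 M : solution_Rplus f u0 psi ->
  (forall t, 0 <= t -> Rabs (psi t) <= M) ->
  exists L K, 0 <= L /\ 0 <= K /\
    forall a b, K <= a -> K <= b -> Rabs (psi b - psi a) <= L * Rabs (b - a).
Proof.
  intros Hpsi HM.
  destruct (periodic_bounded tau Htau P Hper HP M) as [B1 HB1].
  destruct (HQ M 1 ltac:(lra)) as [T0 HT0].
  exists (Rmax 0 (B1 + 1)), (Rmax 0 T0). split; [apply Rmax_l|split; [apply Rmax_l|]].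
  intros a b Ha Hb.
  pose proof (Rmax_l 0 T0). pose proof (Rmax_r 0 T0). pose proof (Rmax_r 0 (B1 + 1)).
  pose proof (Rmax_l a b). pose proof (Rmax_r a b).
  apply (solution_lipschitz_on _ _ _ Hpsi (Rmax 0 T0) (Rmax a b) _ M); try lra.
  - intros t x Ht Hx. rewrite HfPQ. eapply Rle_trans; [apply Rabs_triang|].
    pose proof (HB1 t x Hx). pose proof (HT0 t x ltac:(lra) Hx). lra.
  - intros t Ht. apply HM. lra.
Qed.

Lemma trap_not_recurrent (U : ultrafilter R) psi u0 s z eta rho K c L K1 : 0 < c ->
  (forall T, K <= T -> near_phase T s rho ->
    forall phi, solution_Rplus (shift f T) (z - eta) phi -> z + c < phi tau) ->
  0 <= K -> 0 < eta -> 0 < rho -> solution_Rplus f u0 psi -> 0 <= L ->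
  (forall a b, K1 <= a -> K1 <= b -> Rabs (psi b - psi a) <= L * Rabs (b - a)) ->
  (forall K', almost U (fun t => K' <= t)) ->
  ulim U (phase tau) s -> ulim U psi z -> False.
Proof.
  intros Hc Trap HK0 Heta Hrho Hpsi HL Lip HK Hs Hz.
  set (rho2 := Rmin rho (c / (4 * (L + 1)))).
  assert (Hr2 : 0 < rho2) by (apply Rmin_glb_lt; auto; apply Rdiv_lt_0_compat; lra).
  assert (Hr2a : rho2 <= rho) by apply Rmin_l.
  assert (Hr2b : L * (2 * rho2) <= c / 2).
  { assert (rho2 <= c / (4 * (L + 1))) by apply Rmin_r.
    assert (E : c / (4 * (L + 1)) * (4 * (L + 1)) = c) by (field; lra). nra. }
  destruct (almost_exists U _ (almost_and3 U _ _ _ (HK (Rmax K K1)) (Hs rho2 Hr2) (Hz eta Heta)))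
    as [t' [Ht1 [Ht2 Ht3]]].
  pose proof (Rmax_l K K1). pose proof (Rmax_r K K1).
  assert (Nt' : near_phase t' s rho) by (apply near_phase_of_phase; lra).
  assert (Pt' : z - eta <= psi t') by (apply Rabs_def2 in Ht3; lra).
  apply (almost_absurd U _ (almost_and3 U _ _ _ (HK (t' + 2 * tau)) (Hs rho2 Hr2)
    (Hz (c / 2) ltac:(lra)))).
  intros t [Hta [Htb Htc]].
  destruct (phase_close_period_multiple tau Htau t t' s rho2 Hta Htb Ht2) as [k Hk].
  pose proof (trapped_orbit s z eta rho K c psi u0 ltac:(lra) Trap HK0 Heta Hpsi k t'
    ltac:(lra) Nt' Pt') as Hin.
  pose proof (pos_INR (S k)).
  assert (Hl : Rabs (psi t - psi (t' + INR (S k) * tau)) <= L * (2 * rho2)).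
  { eapply Rle_trans; [apply Lip; nra|].
    apply Rmult_le_compat_l; auto. lra. }
  apply Rabs_def2 in Htc. apply Rabs_le_between in Hl. lra.
Qed.

Lemma S_asymptotically_periodic_upper psi u0 M : solution_Rplus f u0 psi ->
  (forall t, 0 <= t -> Rabs (psi t) <= M) ->
  forall eps, 0 < eps -> exists K, forall t, K <= t -> psi (t + tau) - psi t < eps.
Proof.
  intros Hpsi HM eps Heps. apply Classical_Prop.NNPP; intro Hno.
  set (Bs := fun (n : nat) (t : R) => INR n <= t /\ eps <= psi (t + tau) - psi t).
  assert (Hne : forall n, exists t, Bs n t).
  { intros n. apply Classical_Prop.NNPP. intros Hn. apply Hno. exists (INR n). intros t Ht.
    apply Rnot_le_lt. intros Hl. apply Hn. exists t. split; auto. }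
  assert (Hdec : forall n t, Bs (S n) t -> Bs n t).
  { intros n t [H1 H2]. split; auto. rewrite S_INR in H1. lra. }
  destruct (ultrafilter_refining_chain _ Bs Hne Hdec) as [U HU].
  assert (HK : forall K, almost U (fun t => K <= t)).
  { intros K. destruct (INR_unbounded K) as [n Hn]. eapply almost_impl; [|exact (HU n)].
    intros t [H1 _]. lra. }
  destruct (ulim_exists U (phase tau) tau) as [s [_ Hs]].
  { eapply almost_impl; [|exact (almost_True U)]. intros t _.
    pose proof (phase_bounds tau Htau t). rewrite Rabs_pos_eq; lra. }
  assert (Hs0 : 0 <= s).
  { apply (ulim_ge U (phase tau)); auto. eapply almost_impl; [|exact (almost_True U)].
    intros t _. apply phase_bounds, Htau. }
  destruct (ulim_exists U psi M) as [z [_ Hz]].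
  { eapply almost_impl; [|exact (HK 0)]. intros t Ht. apply HM, Ht. }
  destruct (PR _ (in_Hplus_shift_periodic_part s Hs0) z) as [Y [HY _]].
  assert (LY : ulim U (fun t => psi (t + tau)) (Y tau)).
  { apply (ulim_shifted_solution U (fun t => t) s HK
      (fun rho Hr => almost_impl U _ _ (fun t => near_phase_of_phase tau t s rho) (Hs rho Hr))
      (fun t x => psi (t + x)) z Y Hs0 HY); [| |lra].
    - eapply almost_impl; [|exact (HK 0)]. intros t Ht. rewrite Rplus_0_r.
      exact (solution_shift _ _ _ Hpsi t Ht).
    - eapply ulim_ext; [|exact Hz]. intros t. rewrite Rplus_0_r. reflexivity. }
  assert (HYz : eps <= Y tau - z).
  { apply (ulim_ge U (fun t => psi (t + tau) - psi t)); [apply ulim_minus; auto|].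
    eapply almost_impl; [|exact (HU 0%nat)]. intros t [_ H]. exact H. }
  destruct (trapping_neighbourhood s z Y (eps / 2) Hs0 HY ltac:(lra))
    as [eta [rho [K [Heta [Hrho [HK0 Trap]]]]]].
  destruct (solution_eventually_lipschitz psi u0 M Hpsi HM) as [L [K1 [HL [_ Lip]]]].
  exact (trap_not_recurrent U psi u0 s z eta rho K (eps / 2) L K1 ltac:(lra) Trap HK0 Heta Hrho
    Hpsi HL Lip HK Hs Hz).
Qed.

End AsymptoticallyPeriodic.

Lemma S_asymptotically_periodic_upper_bound tau f u0 phi : 0 < tau -> cont2 f ->
  asymp_periodic tau f -> positively_regular f -> solution_Rplus f u0 phi ->
  (exists M, forall t, 0 <= t -> Rabs (phi t) <= M) ->
  forall eps, 0 < eps -> exists K, forall t, K <= t -> phi (t + tau) - phi t < eps.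
Proof.
  intros Htau Hf [P [Q [HP [_ [HfPQ [Hper HQ]]]]]] PR Hphi [M HM].
  exact (S_asymptotically_periodic_upper tau f P Q Htau Hf HP HfPQ Hper HQ PR phi u0 M Hphi HM).
Qed.

Definition neg_field (g : R -> R -> R) := fun t x => - g t (- x).

Lemma cont2_neg_field g : cont2 g -> cont2 (neg_field g).
Proof.
  intros Hg. apply cont2_eps_delta. intros t x e He. unfold neg_field.
  destruct (proj1 (cont2_eps_delta g) Hg t (- x) e He) as [d [Hd H]]. exists d. split; auto.
  intros t' x' H1 H2. replace (- g t' (- x') - - g t (- x)) with (- (g t' (- x') - g t (- x))) by ring.
  rewrite Rabs_Ropp. apply H; auto. replace (- x' - - x) with (- (x' - x)) by ring.
  rewrite Rabs_Ropp. exact H2.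
Qed.

Lemma solution_on_neg_field g v T u : solution_on g v T u ->
  solution_on (neg_field g) (- v) T (fun t => - u t).
Proof.
  intros [H0 [Hrc Hd]]. split; [|split].
  - simpl. rewrite H0. reflexivity.
  - apply (right_continuous_filterlim (fun t => - u t)). intros e He.
    destruct (proj1 (right_continuous_filterlim u 0) Hrc e He) as [d [Hd0 H]].
    exists d. split; auto. intros t Ht. replace (- u t - - u 0) with (- (u t - u 0)) by ring.
    rewrite Rabs_Ropp. apply H; auto.
  - intros t Ht. unfold neg_field. rewrite Ropp_involutive.
    apply (is_derive_opp u t). apply Hd, Ht.
Qed.

Lemma solution_Rplus_neg_field g v u : solution_Rplus g v u ->
  solution_Rplus (neg_field g) (- v) (fun t => - u t).
Proof. intros H T HT. apply solution_on_neg_field, H, HT. Qed.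

Lemma neg_field_involutive g : neg_field (neg_field g) = g.
Proof.
  apply functional_extensionality. intros t. apply functional_extensionality. intros x.
  unfold neg_field. rewrite !Ropp_involutive. reflexivity.
Qed.

Lemma in_Hplus_neg_field f g : in_Hplus f g -> in_Hplus (neg_field f) (neg_field g).
Proof.
  intros [Hc Ha]. split; [apply cont2_neg_field; auto|].
  intros r eps He. destruct (Ha r eps He) as [h [Hh H]]. exists h. split; auto.
  intros t x Ht Hx. specialize (H t (- x) Ht ltac:(rewrite Rabs_Ropp; exact Hx)).
  unfold neg_field.
  replace (- f (t + h) (- x) - - g t (- x)) with (- (f (t + h) (- x) - g t (- x))) by ring.
  rewrite Rabs_Ropp. exact H.
Qed.

Lemma positively_regular_neg_field f : positively_regular f -> positively_regular (neg_field f).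
Proof.
  intros PR g Hg v.
  pose proof (in_Hplus_neg_field _ _ Hg) as Hg'. rewrite neg_field_involutive in Hg'.
  destruct (PR (neg_field g) Hg' (- v)) as [phi [Hphi Hu]].
  exists (fun t => - phi t). split.
  - pose proof (solution_Rplus_neg_field _ _ _ Hphi) as S.
    rewrite neg_field_involutive, Ropp_involutive in S. exact S.
  - intros T psi HT Hpsi t Ht.
    rewrite <- (Hu T (fun t => - psi t) HT (solution_on_neg_field _ _ _ _ Hpsi) t Ht). ring.
Qed.

Lemma asymp_periodic_neg_field tau f : asymp_periodic tau f -> asymp_periodic tau (neg_field f).
Proof.
  intros [P [Q [HP [HQ [HfPQ [Hper HQl]]]]]]. exists (neg_field P), (neg_field Q).
  split; [apply cont2_neg_field; auto|]. split; [apply cont2_neg_field; auto|]. split.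
  - intros t x. unfold neg_field. rewrite HfPQ. ring.
  - split.
    + intros t x. unfold neg_field. rewrite Hper. reflexivity.
    + intros r eps He. destruct (HQl r eps He) as [T0 H]. exists T0. intros t x Ht Hx.
      unfold neg_field. rewrite Rabs_Ropp. apply H; auto. rewrite Rabs_Ropp; auto.
Qed.

Theorem theorem1p2 (tau : R) (f : R -> R -> R) (u0 : R) (phi : R -> R) :
  0 < tau ->
  cont2 f ->
  asymp_periodic tau f ->
  positively_regular f ->
  solution_Rplus f u0 phi ->
  (exists M, forall t, 0 <= t -> Rabs (phi t) <= M) ->
  is_lim (fun t => Rabs (phi (t + tau) - phi t)) p_infty 0.
Proof.
  intros Htau Hf HAP PR Hphi [M HM].
  apply is_lim_spec. intros [e He]. simpl.
  destruct (S_asymptotically_periodic_upper_bound tau f u0 phi Htau Hf HAP PR Hphi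
    (ex_intro _ M HM) e He) as [K1 H1].
  destruct (S_asymptotically_periodic_upper_bound tau (neg_field f) (- u0) (fun t => - phi t) Htau
    (cont2_neg_field f Hf) (asymp_periodic_neg_field tau f HAP) (positively_regular_neg_field f PR)
    (solution_Rplus_neg_field f u0 phi Hphi)) with (eps := e) as [K2 H2]; auto.
  { exists M. intros t Ht. rewrite Rabs_Ropp. auto. }
  exists (Rmax K1 K2). intros t Ht. pose proof (Rmax_l K1 K2). pose proof (Rmax_r K1 K2).
  specialize (H1 t ltac:(lra)). specialize (H2 t ltac:(lra)).
  rewrite Rminus_0_r, Rabs_Rabsolu. apply Rabs_def1; lra.
Qed.
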